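(* Let $\xi$ be an incompatibility witness of the form $$\xi(\mathsf B_1,\dots,\mathsf B_n)=\delta-\sum_{j=1}^n\sum_{x_j=1}^{m_j}c_{j,x_j}\mathrm{Tr}[\varrho_{j,x_j}\mathsf B_j(x_j)],$$ with $\delta,c_{j,x_j}\in\mathbb R$ and states $\varrho_{j,x_j}$, and suppose $\xi$ detects the incompatibility of observables $\mathsf A_1,\dots,\mathsf A_n$. Then $\mathsf A_1,\dots,\mathsf A_n$ are $\mathcal S_0$-incompatible for $\mathcal S_0=\{\varrho_{j,x_j}:j=1,\dots,n,\ x_j=1,\dots,m_j\}$.
   Context: Observables are POVMs on a finite-dimensional Hilbert space; $\mathsf A_j$ and $\mathsf B_j$ have outcome set $\{1,\dots,m_j\}$. Observables $\mathsf A_1,\dots,\mathsf A_n$ are compatible if there is a joint observable $\mathsf G$ on the product outcome set with $\mathsf A_j(x_j)=\sum_{x_l,l\neq j}\mathsf G(x_1,\dots,x_n)$ for all $j$; otherwise incompatible. An incompatibility witness is an affine functional $\xi$ on $n$-tuples of observables (with fixed outcome numbers $m_1,\dots,m_n$) that is nonnegative on all compatible $n$-tuples and negative on at least one incompatible $n$-tuple; it detects the incompatibility of $\mathsf A_1,\dots,\mathsf A_n$ if $\xi(\mathsf A_1,\dots,\mathsf A_n)<0$. For a set of states $\mathcal S_0$, observables are $\mathcal S_0$-compatible if there exist compatible observables $\mathsf A'_j$ (same outcome sets) with $\mathrm{Tr}[\varrho\mathsf A'_j(x)]=\mathrm{Tr}[\varrho\mathsf A_j(x)]$ for all $j,x,\varrho\in\mathcal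 S_0$; otherwise $\mathcal S_0$-incompatible. *)

From HB Require Import structures.
From mathcomp Require Import all_boot all_order all_algebra.
From mathcomp Require Import complex.
From mathcomp Require Import reals.
Set Implicit Arguments. Unset Strict Implicit. Unset Printing Implicit Defensive.
Import Order.TTheory GRing.Theory Num.Theory.
Local Open Scope ring_scope.

Definition adjmx (R : realType) (p q : nat) (A : 'M[R[i]]_(p, q)) : 'M[R[i]]_(q, p) :=
  (map_mx Num.conj A)^T.

Definition psd (R : realType) (d : nat) (A : 'M[R[i]]_d) : Prop :=
  adjmx A = A /\ forall v : 'cV[R[i]]_d, 0 <= (adjmx v *m A *m v) 0 0.

Definition is_state (R : realType) (d : nat) (rho : 'M[R[i]]_d) : Prop :=
  psd rho /\ \tr rho = 1.

Definition is_povm (R : realType) (d : nat) (T : finType) (A : T -> 'M[R[i]]_d) : Prop :=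
  (forall x, psd (A x)) /\ \sum_(x : T) A x = 1%:M.

Definition obs_tuple (R : realType) (d n : nat) (m : 'I_n -> nat)
  (A : forall j : 'I_n, 'I_(m j) -> 'M[R[i]]_d) : Prop :=
  forall j, is_povm (A j).

Definition compatible (R : realType) (d n : nat) (m : 'I_n -> nat)
  (A : forall j : 'I_n, 'I_(m j) -> 'M[R[i]]_d) : Prop :=
  exists G : {dffun forall j : 'I_n, 'I_(m j)} -> 'M[R[i]]_d,
    is_povm G /\
    forall (j : 'I_n) (x : 'I_(m j)), A j x = \sum_(g : {dffun forall k : 'I_n, 'I_(m k)} | g j == x) G g.

Definition S0_compatible (R : realType) (d n : nat) (m : 'I_n -> nat)
  (S0 : 'M[R[i]]_d -> Prop)
  (A : forall j : 'I_n, 'I_(m j) -> 'M[R[i]]_d) : Prop :=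
  exists A' : forall j : 'I_n, 'I_(m j) -> 'M[R[i]]_d,
    obs_tuple A' /\ compatible A' /\
    forall (j : 'I_n) (x : 'I_(m j)) rho, S0 rho ->
      \tr (rho *m A' j x) = \tr (rho *m A j x).

Definition incompat_witness (R : realType) (d n : nat) (m : 'I_n -> nat)
  (xi : (forall j : 'I_n, 'I_(m j) -> 'M[R[i]]_d) -> R[i]) : Prop :=
  (forall B, obs_tuple B -> compatible B -> 0 <= xi B) /\
  (exists B, obs_tuple B /\ ~ compatible B /\ xi B < 0).

Definition linear_witness (R : realType) (d n : nat) (m : 'I_n -> nat)
  (delta : R) (c : forall j : 'I_n, 'I_(m j) -> R)
  (rho : forall j : 'I_n, 'I_(m j) -> 'M[R[i]]_d)
  (B : forall j : 'I_n, 'I_(m j) -> 'M[R[i]]_d) : R[i] :=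
  (delta%:C)%C - \sum_(j < n) \sum_(x < m j) ((c j x)%:C)%C * \tr (rho j x *m B j x).

From HB Require Import structures.
From mathcomp Require Import all_boot all_order all_algebra.
From mathcomp Require Import complex.
From mathcomp Require Import reals.
Import Order.TTheory GRing.Theory Num.Theory.
Local Open Scope ring_scope.

(* A linear witness only sees the statistics of the observables in the states
   [rho j x]. An S0-compatible tuple has the same statistics as a compatible
   tuple, on which the witness is nonnegative; so the witness cannot be
   negative on it. *)

Lemma linear_witness_eq_stats (R : realType) (d n : nat) (m : 'I_n -> nat)
    (delta : R) (c : forall j : 'I_n, 'I_(m j) -> R)
    (rho B B' : forall j : 'I_n, 'I_(m j) -> 'M[R[i]]_d) :
  (forall j x, \tr (rho j x *m B j x) = \tr (rho j x *m B' j x)) ->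
  linear_witness delta c rho B = linear_witness delta c rho B'.
Proof.
move=> eq_tr; rewrite /linear_witness; congr (_ - _).
by apply: eq_bigr => j _; apply: eq_bigr => x _; rewrite eq_tr.
Qed.

Lemma S0_incompatible_of_witness (R : realType) (d n : nat) (m : 'I_n -> nat)
    (S0 : 'M[R[i]]_d -> Prop)
    (xi : (forall j : 'I_n, 'I_(m j) -> 'M[R[i]]_d) -> R[i])
    (A : forall j : 'I_n, 'I_(m j) -> 'M[R[i]]_d) :
  (forall B, obs_tuple B -> compatible B -> 0 <= xi B) ->
  (forall B B', (forall j x sigma, S0 sigma ->
     \tr (sigma *m B j x) = \tr (sigma *m B' j x)) -> xi B = xi B') ->
  xi A < 0 -> ~ S0_compatible S0 A.
Proof.
move=> xi_ge0 xi_stats xiA_lt0 [A' [obsA' [compA' eq_tr]]].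
have eq_xi : xi A' = xi A by apply: xi_stats.
by have := lt_le_trans xiA_lt0 (xi_ge0 A' obsA' compA'); rewrite eq_xi ltxx.
Qed.

Theorem proposition4p3 (R : realType) (d n : nat) (m : 'I_n -> nat)
  (delta : R) (c : forall j : 'I_n, 'I_(m j) -> R)
  (rho : forall j : 'I_n, 'I_(m j) -> 'M[R[i]]_d)
  (A : forall j : 'I_n, 'I_(m j) -> 'M[R[i]]_d) :
  (forall j x, is_state (rho j x)) ->
  incompat_witness (linear_witness delta c rho) ->
  obs_tuple A ->
  linear_witness delta c rho A < 0 ->
  ~ S0_compatible (fun sigma => exists (j : 'I_n) (x : 'I_(m j)), sigma = rho j x) A.
Proof.
move=> _ [xi_ge0 _] _; apply: S0_incompatible_of_witness => // B B' eq_tr.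
by apply: linear_witness_eq_stats => j x; apply: eq_tr; exists j, x.
Qed.
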